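(* Let $k\ge3$ and $d$ a positive integer, and let $z^*$ be the minimal spike of degree $(k-2)(2^d-1)$. If $d>\delta(k-2)$, then $\omega_i(z^* )=k-2$ for $1\le i\le d-\delta(k-2)$ and $\omega_i(z^* )<k-2$ for $i>d-\delta(k-2)$.
   Context: For a positive integer $a$, $\alpha(a)$ is the number of ones in its binary expansion, $\zeta(a)$ is the largest $u$ with $2^u\mid a$, and $\delta(a)=a-\alpha(a)-\zeta(a)$. For a monomial $x=x_1^{a_1}\cdots x_k^{a_k}$, $\omega_i(x)=\sum_j\alpha_{i-1}(a_j)$ where $\alpha_r(a)$ is the $r$-th binary digit of $a$. For a positive integer $n$, $\mu(n)$ is the least $r$ with $n=\sum_{i=1}^r(2^{u_i}-1)$, $u_i>0$; if $\mu(n)=s$ then $n=\sum_{i=1}^s(2^{e_i}-1)$ for unique integers $e_1>e_2>\dots>e_{s-1}\ge e_s>0$, and the minimal spike of degree $n$ is $\prod_{i=1}^sx_i^{2^{e_i}-1}$. *)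

From mathcomp Require Import all_boot.
Set Implicit Arguments. Unset Strict Implicit. Unset Printing Implicit Defensive.

Definition bit (r a : nat) : nat := odd (a %/ 2 ^ r).

(* alpha(a): number of ones in the binary expansion (a < 2^a, so bits < a suffice) *)
Definition alpha (a : nat) : nat := \sum_(r < a) bit r a.

Definition zeta (a : nat) : nat := logn 2 a.

Definition delta (a : nat) : nat := a - alpha a - zeta a.

(* A monomial x_1^{a_1} ... x_m^{a_m} is represented by its exponent list.
   omega_i(x) = sum_j alpha_{i-1}(a_j). *)
Definition omega (i : nat) (x : seq nat) : nat := \sum_(a <- x) bit i.-1 a.

Definition spike_sum (u : seq nat) : nat := \sum_(v <- u) (2 ^ v - 1).

Definition is_rep (n : nat) (u : seq nat) : Prop :=
  all (fun v => 0 < v) u /\ spike_sum u = n.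

(* e = (e_1, ..., e_s) are the exponents of the minimal spike of degree n:
   s = mu(n) (least length of a representation), n = sum (2^{e_i}-1),
   e_1 > e_2 > ... > e_{s-1} >= e_s > 0. *)
Definition min_spike_exps (n : nat) (e : seq nat) : Prop :=
  [/\ is_rep n e,
      (forall u, is_rep n u -> size e <= size u) &
      (forall i, i.+1 < size e ->
          (nth 0 e i.+1 < nth 0 e i) \/
          (i.+2 = size e /\ nth 0 e i.+1 <= nth 0 e i))].

(* the minimal spike prod_{i=1}^s x_i^{2^{e_i}-1}, as exponent list *)
Definition spike_of (e : seq nat) : seq nat := map (fun v => 2 ^ v - 1) e.

From mathcomp Require Import all_boot zify.

Set Implicit Arguments.
Unset Strict Implicit.

(* Proof of Proposition 3.  Write w(n) = alpha(n) + zeta(n), so that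
   delta(n) = n - w(n).  The exponents e_1 > ... > e_{s-1} >= e_s of the minimal
   spike of degree m(2^d - 1) (with m = k - 2) satisfy sum_i 2^{e_i} =
   m(2^d - 1) + s, and the whole argument compares w of such a sum of powers
   of two with the shape of the exponent list:
   - upper bound: if every exponent of l is >= c and c occurs in l, then
     w(sum_{v in l} 2^v) <= |l| + c (subadditivity of alpha and w under adding
     a power of two);
   - lower bound: if l = (c, l') with l' strictly increasing and c <= min l',
     then w(sum 2^v) >= |l| + c (carry propagation is exact here).
   Comparing the minimal spike with the padded list (e, 0, ..., 0) and the
   bound delta(m) < d first gives s = m, so sum 2^{e_i} = m 2^d and
   w(m 2^d) = d + w(m); both bounds applied to e then force the smallest
   exponent e_s to be d - delta(m).  Since bit i-1 of 2^v - 1 is set exactly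
   when i <= v, omega_i of the spike counts the exponents >= i, which gives
   the claim. *)

Lemma bit0E n : bit 0 n = odd n.
Proof. by rewrite /bit expn0 divn1. Qed.

Lemma bitS r n : bit r.+1 n = bit r n./2.
Proof. by rewrite /bit expnS divnMA divn2. Qed.

Lemma bit_small r n : n <= r -> bit r n = 0.
Proof.
move=> le_nr; rewrite /bit divn_small //.
by apply: leq_trans (ltn_expl n (isT : 1 < 2)) _; rewrite leq_exp2l.
Qed.

Lemma alpha_wide B n : n <= B -> alpha n = \sum_(0 <= r < B) bit r n.
Proof.
move=> le_nB; rewrite /alpha -(big_mkord xpredT (fun r => bit r n)).
rewrite (@big_cat_nat _ _ _ n 0 B) //= [X in _ + X]big1_seq ?addn0 // => r.
by rewrite mem_index_iota => /andP[_ /andP[le_nr _]]; apply: bit_small.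
Qed.

Lemma alpha_half n : alpha n = odd n + alpha n./2.
Proof.
rewrite (@alpha_wide n.+1 n (leqnSn n)) big_nat_recl // bit0E.
rewrite (@alpha_wide n n./2); last by lia.
by congr (_ + _); apply: eq_bigr => r _; rewrite bitS.
Qed.

Lemma alpha0 : alpha 0 = 0.
Proof. by rewrite /alpha big_ord0. Qed.

Lemma alpha_double b : alpha b.*2 = alpha b.
Proof. by rewrite alpha_half odd_double doubleK. Qed.

Lemma alpha_doubleS b : alpha b.*2.+1 = (alpha b).+1.
Proof. by rewrite alpha_half /= odd_double uphalf_double. Qed.

Lemma alpha_pow2M c n : alpha (2 ^ c * n) = alpha n.
Proof.
elim: c => [|c IH]; first by rewrite mul1n.
by rewrite expnS -mulnA mul2n alpha_double.
Qed.

Lemma zeta_double b : 0 < b -> zeta b.*2 = (zeta b).+1.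
Proof.
move=> b_gt0; rewrite /zeta lognE /= dvdn2 odd_double /= double_gt0 b_gt0.
by rewrite divn2 doubleK.
Qed.

Lemma zeta_doubleS b : zeta b.*2.+1 = 0.
Proof. by rewrite /zeta lognE dvdn2 /= odd_double. Qed.

Definition weight (n : nat) : nat := alpha n + zeta n.

Lemma deltaE n : delta n = n - weight n.
Proof. by rewrite /delta /weight subnDA. Qed.

Lemma weight_double b : 0 < b -> weight b.*2 = (weight b).+1.
Proof. by move=> b_gt0; rewrite /weight alpha_double zeta_double // addnS. Qed.

Lemma weight_doubleS b : weight b.*2.+1 = (alpha b).+1.
Proof. by rewrite /weight alpha_doubleS zeta_doubleS addn0. Qed.

Lemma weight1 : weight 1 = 1.
Proof. by rewrite (weight_doubleS 0) alpha0. Qed.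

Lemma weight_pow2M c n : 0 < n -> weight (2 ^ c * n) = c + weight n.
Proof.
move=> n_gt0; elim: c => [|c IH]; first by rewrite mul1n.
by rewrite expnS -mulnA mul2n weight_double ?IH // muln_gt0 expn_gt0.
Qed.

Lemma half_cases n : n = (n./2).*2 \/ n = (n./2).*2.+1.
Proof. lia. Qed.

Lemma alpha_succ_le a : alpha a.+1 <= (alpha a).+1.
Proof.
elim/ltn_ind: a => a IH; case: (half_cases a) => a_eq; rewrite a_eq.
  by rewrite alpha_doubleS alpha_double.
rewrite -doubleS alpha_double alpha_doubleS.
by apply: leq_trans (IH _ _) _ => //; lia.
Qed.

Lemma alpha_add_pow2_le s a : alpha (a + 2 ^ s) <= (alpha a).+1.
Proof.
elim: s a => [|s IH] a; first by rewrite addn1 alpha_succ_le.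
case: (half_cases a) => ->.
  by rewrite expnS mul2n -doubleD !alpha_double.
by rewrite expnS mul2n addSn -doubleD !alpha_doubleS ltnS.
Qed.

Lemma weight_succ_le a : weight a.+1 <= (alpha a).+1.
Proof.
elim/ltn_ind: a => a IH; case: (half_cases a) => a_eq; rewrite a_eq.
  by rewrite weight_doubleS alpha_double.
rewrite -doubleS weight_double // alpha_doubleS ltnS.
by apply: leq_trans (IH _ _) _ => //; lia.
Qed.

Lemma weight_add_pow2_le s n : 0 < n -> weight (n + 2 ^ s) <= (weight n).+1.
Proof.
elim: s n => [|s IH] n n_gt0.
  by rewrite addn1; apply: leq_trans (weight_succ_le n) _; rewrite /weight; lia.
case: (half_cases n) => n_eq; rewrite n_eq expnS mul2n.
  have half_gt0 : 0 < n./2 by lia.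
  by rewrite -doubleD !weight_double ?ltnS ?IH // addn_gt0 half_gt0.
by rewrite addSn -doubleD !weight_doubleS ltnS alpha_add_pow2_le.
Qed.

Definition pow2_sum (l : seq nat) : nat := \sum_(v <- l) 2 ^ v.

Lemma pow2_sum_cons x l : pow2_sum (x :: l) = 2 ^ x + pow2_sum l.
Proof. by rewrite /pow2_sum big_cons. Qed.

Lemma pow2_sum_cat l1 l2 : pow2_sum (l1 ++ l2) = pow2_sum l1 + pow2_sum l2.
Proof. by rewrite /pow2_sum big_cat. Qed.

Lemma pow2_sum_nseq0 t : pow2_sum (nseq t 0) = t.
Proof. by elim: t => [|t IH]; rewrite /= ?pow2_sum_cons ?IH //= /pow2_sum big_nil. Qed.

Lemma pow2_sum_shift c l : all (leq c) l ->
  pow2_sum l = 2 ^ c * pow2_sum (map (subn^~ c) l).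
Proof.
elim: l => [|x l IH] /=; first by rewrite /pow2_sum !big_nil muln0.
by move=> /andP[le_cx all_l]; rewrite !pow2_sum_cons IH // mulnDr -expnD subnKC.
Qed.

Lemma sorted_ltn_shift c l : sorted ltn l -> all (leq c) l ->
  sorted ltn (map (subn^~ c) l).
Proof.
case: l => [|x l] //=; elim: l x => [|y l IH] x //= /andP[lt_xy path_l].
by move=> /and3P[le_cx le_cy all_l]; rewrite IH ?le_cy // andbT; lia.
Qed.

Lemma weight_one_add_pow2_sum l : weight (1 + pow2_sum l) <= (size l).+1.
Proof.
elim: l => [|x l IH]; first by rewrite /pow2_sum big_nil weight1.
rewrite pow2_sum_cons addnCA addnC.
by apply: leq_trans (weight_add_pow2_le _ _) _.
Qed.

Lemma weight_pow2_sum_le c l : all (leq c) l -> c \in l ->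
  weight (pow2_sum l) <= size l + c.
Proof.
move=> all_l c_in_l; have perm_l := perm_to_rem c_in_l.
have -> : pow2_sum l = pow2_sum (c :: rem c l) by rewrite /pow2_sum (perm_big _ perm_l).
rewrite (perm_size perm_l) (@pow2_sum_shift c); last by rewrite -(perm_all _ perm_l).
rewrite /= pow2_sum_cons subnn expn0 weight_pow2M ?addn_gt0 //.
by have := weight_one_add_pow2_sum (map (subn^~ c) (rem c l)); rewrite size_map; lia.
Qed.

(* Distinct exponents give distinct binary digits. *)
Lemma alpha_pow2_sum_sorted l : sorted ltn l -> alpha (pow2_sum l) = size l.
Proof.
have [n] := ubnP (size l); elim: n l => // n IH [|y l] /= size_lt.
  by rewrite /pow2_sum big_nil alpha0.
rewrite (path_sortedE ltn_trans) => /andP[all_l sorted_l].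
rewrite pow2_sum_cons (pow2_sum_shift all_l).
have -> : 2 ^ y + 2 ^ y.+1 * pow2_sum (map (subn^~ y.+1) l)
   = 2 ^ y * (pow2_sum (map (subn^~ y.+1) l)).*2.+1 by rewrite expnS; lia.
rewrite alpha_pow2M alpha_doubleS IH ?size_map ?sorted_ltn_shift //.
Qed.

Lemma weight_pow2_sum_ge c l : sorted ltn l -> c <= head c l ->
  (size l).+1 + c <= weight (pow2_sum (c :: l)).
Proof.
elim: l c => [|y l IH] c sorted_l le_c_head.
  rewrite pow2_sum_cons /pow2_sum big_nil addn0 -(muln1 (2 ^ c)).
  by rewrite weight_pow2M // weight1 addnC.
have [eq_yc | ne_yc] := eqVneq y c.
  subst y.
  have sorted_l' : sorted ltn l := path_sorted sorted_l.
  have le_head : c.+1 <= head c.+1 l.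
    by case: l sorted_l {IH sorted_l' le_c_head} => //= z l /andP[].
  rewrite !pow2_sum_cons addnA addnn -mul2n -expnS -pow2_sum_cons /=.
  by rewrite addSnnS; apply: IH.
have all_yl : all (leq c.+1) (y :: l).
  have : path ltn c (y :: l) by rewrite /= ltn_neqAle eq_sym ne_yc le_c_head.
  by rewrite (path_sortedE ltn_trans) => /andP[].
rewrite pow2_sum_cons (pow2_sum_shift all_yl).
have -> : 2 ^ c + 2 ^ c.+1 * pow2_sum (map (subn^~ c.+1) (y :: l))
   = 2 ^ c * (pow2_sum (map (subn^~ c.+1) (y :: l))).*2.+1 by rewrite expnS; lia.
rewrite weight_pow2M // weight_doubleS alpha_pow2_sum_sorted ?size_map 1?addnC //.
exact: sorted_ltn_shift.
Qed.

(* w(n) <= n, i.e. delta(n) = n - w(n) without truncation. *)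
Lemma weight_le n : 0 < n -> weight n <= n.
Proof.
move=> n_gt0; have := @weight_pow2_sum_le 0 (nseq n 0).
rewrite pow2_sum_nseq0 size_nseq addn0; apply; last by rewrite mem_nseq n_gt0.
by apply/allP => v.
Qed.

Lemma bit_pow2_pred r v : bit r (2 ^ v - 1) = (r < v).
Proof.
have pow_pred_half u : 2 ^ u.+1 - 1 = (2 ^ u - 1).*2.+1.
  by rewrite expnS; have := expn_gt0 2 u; lia.
elim: r v => [|r IH] [|v]; first by [].
- by rewrite bit0E pow_pred_half /= odd_double.
- by rewrite /bit subnn div0n.
- by rewrite bitS pow_pred_half /= uphalf_double IH.
Qed.

Lemma omega_spike i e : 0 < i -> omega i (spike_of e) = count (leq i) e.
Proof.
case: i => // i _; rewrite /omega /spike_of big_map -sum1_count [RHS]big_mkcond /=.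
by apply: eq_bigr => v _; rewrite bit_pow2_pred.
Qed.

Lemma pow2_sum_spike e : all (leq 1) e -> pow2_sum e = spike_sum e + size e.
Proof.
elim: e => [|x e IH] /=; first by rewrite /pow2_sum /spike_sum !big_nil.
move=> /andP[x_gt0 all_e]; rewrite pow2_sum_cons /spike_sum big_cons -/(spike_sum e).
by rewrite IH //; have := expn_gt0 2 x; lia.
Qed.

Lemma spike_sum_nseq m d : spike_sum (nseq m d) = m * (2 ^ d - 1).
Proof.
elim: m => [|m IH]; first by rewrite /spike_sum big_nil.
by rewrite /spike_sum /= big_cons -/(spike_sum _) IH mulSn.
Qed.

Lemma min_spike_rev_shape (e : seq nat) :
  (forall i, i.+1 < size e ->
     (nth 0 e i.+1 < nth 0 e i) \/ (i.+2 = size e /\ nth 0 e i.+1 <= nth 0 e i)) ->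
  e != [::] ->
  exists c l, [/\ rev e = c :: l, sorted ltn l & c <= head c l].
Proof.
case/lastP: e => [|e c] // ordered _; exists c, (rev e).
split; first by rewrite rev_rcons.
  rewrite rev_sorted; apply/(sortedP 0) => i lt_ie.
  have := ordered i; rewrite size_rcons !nth_rcons ltnS lt_ie (ltnW lt_ie).
  by case=> // [[]]; lia.
case/lastP: e ordered => [|e y] //= ordered; rewrite rev_rcons /=.
have := ordered (size e).
rewrite !size_rcons !nth_rcons !size_rcons !ltnSn !ltnn !eqxx.
by case=> // [/ltnW | []].
Qed.

Lemma head_le_all c l : sorted ltn l -> c <= head c l -> all (leq c) (c :: l).
Proof.
case: l => [|y l] /=; rewrite ?leqnn // (path_sortedE ltn_trans).
move=> /andP[all_l _] le_cy; rewrite le_cy /=.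
by apply/allP => v /(allP all_l) /= lt_yv; apply: leq_trans le_cy (ltnW lt_yv).
Qed.

Section MinimalSpike.

Variables (m d : nat) (e : seq nat).
Hypothesis m_gt0 : 0 < m.
Hypothesis spike_e : min_spike_exps (m * (2 ^ d - 1)) e.
Hypothesis delta_lt : delta m < d.

Lemma weight_mpow2 : weight (m * 2 ^ d) = d + weight m.
Proof. by rewrite mulnC weight_pow2M. Qed.

Lemma mpow2E : m * (2 ^ d - 1) + m = m * 2 ^ d.
Proof. by rewrite mulnBr muln1 subnK // leq_pmulr ?expn_gt0. Qed.

(* mu(m(2^d - 1)) = m: the spike (2^d - 1, ..., 2^d - 1) gives s <= m, while a
   shorter representation, padded with zeros, would force d <= delta(m). *)
Lemma min_spike_size : size e = m.
Proof.
case: spike_e => -[pos_e sum_e] min_e _.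
apply/eqP; rewrite eqn_leq; apply/andP; split.
  have := min_e (nseq m d); rewrite size_nseq; apply; split; last exact: spike_sum_nseq.
  have d_gt0 : 0 < d by apply: leq_ltn_trans delta_lt.
  by apply/allP => v; rewrite mem_nseq => /andP[_ /eqP->].
rewrite leqNgt; apply/negP => lt_em.
have := @weight_pow2_sum_le 0 (e ++ nseq (m - size e) 0).
rewrite pow2_sum_cat pow2_sum_nseq0 pow2_sum_spike // sum_e size_cat size_nseq addn0.
have -> : m * (2 ^ d - 1) + size e + (m - size e) = m * 2 ^ d by rewrite -mpow2E; lia.
have all_ge0 : all (leq 0) (e ++ nseq (m - size e) 0) by apply/allP.
rewrite weight_mpow2 mem_cat mem_nseq subn_gt0 lt_em orbT => /(_ all_ge0 isT).
by move: delta_lt; rewrite deltaE; have := weight_le m_gt0; lia.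
Qed.

Lemma min_spike_pow2_sum : pow2_sum e = m * 2 ^ d.
Proof.
case: spike_e => -[pos_e sum_e] _ _.
by rewrite pow2_sum_spike // sum_e min_spike_size mpow2E.
Qed.

(* The smallest exponent is d - delta(m): the two bounds on w(m 2^d) meet. *)
Lemma min_spike_last : exists2 c, c \in e & all (leq c) e /\ c = d - delta m.
Proof.
case: spike_e => _ _ ordered.
have e_nil : e != [::] by rewrite -size_eq0 min_spike_size -lt0n.
have [c [l [rev_e sorted_l le_c_head]]] := min_spike_rev_shape ordered e_nil.
have perm_e : perm_eq e (c :: l) by rewrite -rev_e perm_sym perm_rev.
have all_e : all (leq c) e by rewrite (perm_all _ perm_e) head_le_all.
have c_in : c \in e by rewrite (perm_mem perm_e) mem_head.
exists c => //; split => //.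
have upper := weight_pow2_sum_le all_e c_in.
have lower := weight_pow2_sum_ge sorted_l le_c_head.
have pow2_sum_e : pow2_sum (c :: l) = pow2_sum e.
  by rewrite /pow2_sum (perm_big _ perm_e).
have size_l : (size l).+1 = m by rewrite -min_spike_size (perm_size perm_e).
rewrite pow2_sum_e min_spike_pow2_sum weight_mpow2 size_l in lower.
rewrite min_spike_pow2_sum weight_mpow2 min_spike_size in upper.
by rewrite deltaE; have := weight_le m_gt0; lia.
Qed.

End MinimalSpike.

Theorem proposition3 (k d : nat) (e : seq nat) :
  3 <= k -> 0 < d ->
  min_spike_exps ((k - 2) * (2 ^ d - 1)) e ->
  delta (k - 2) < d ->
  (forall i, 1 <= i <= d - delta (k - 2) -> omega i (spike_of e) = k - 2) /\
  (forall i, d - delta (k - 2) < i -> omega i (spike_of e) < k - 2).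
Proof.
move=> le3k _ spike_e delta_lt.
have m_gt0 : 0 < k - 2 by lia.
have size_e := min_spike_size m_gt0 spike_e delta_lt.
have [c c_in [all_e <-]] := min_spike_last m_gt0 spike_e delta_lt.
split=> [i /andP[i_gt0 le_ic] | i lt_ci]; rewrite omega_spike //; last by lia.
  apply/eqP; rewrite -size_e -all_count; apply/allP => v /(allP all_e).
  exact: leq_trans.
rewrite -size_e -(count_predC (leq i) e) -addn1 leq_add2l.
by rewrite -has_count; apply/hasP; exists c => //=; rewrite -ltnNge.
Qed.
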